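(* Let $\mathcal{G}$ be the affine plane of order $3$, let $\ell=\{a_1,a_2,a_3\}$, $m=\{b_1,b_2,b_3\}$, $n=\{c_1,c_2,c_3\}$ be its three pairwise parallel lines in one parallel class, let $R$ be a commutative ring with $2=0$, $A=M_R(\mathcal{G},1)$, and let $s$ be the sum of all $9$ points. Identify each line with the sum of its points in $A$. Then $\operatorname{ad}_\ell$ has eigenvalues $0$ and $1$, with eigenspaces \[ A^\ell_0=\langle a_1,a_2,a_3,s\rangle,\qquad A^\ell_1=\langle b_1+b_2,b_1+b_3,c_1+c_2,c_1+c_3\rangle, \] and generalized eigenspaces \[ \widetilde A^\ell_0=\langle a_1,a_2,a_3,m,n\rangle,\qquad \widetilde A^\ell_1=A^\ell_1 . \] In particular, $A=\widetilde A^\ell_0\oplus A^\ell_1$.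
   Context: The affine plane of order $3$ is the partial linear space of the $9$ points and $12$ lines of the affine plane over $\mathbb{F}_3$; any two distinct points $p,q$ are collinear (written $p\sim q$) and $p\wedge q$ is the third point of their line. The nilpotent Matsuo algebra $A=M_R(\mathcal{G},1)$ is the free $R$-module with basis the points and commutative bilinear product $p\cdot q=0$ if $p=q$, $p\cdot q=p+q+p\wedge q$ if $p\sim q$. $\operatorname{ad}_\ell(v)=\ell v$; eigenspace for $\lambda$: $\{v:\ell v=\lambda v\}$; generalized eigenspace: $\{v:(\operatorname{ad}_\ell-\lambda)^kv=0 \text{ for some } k\}$. Angle brackets denote $R$-linear span. *)

From HB Require Import structures.
From mathcomp Require Import all_boot all_order all_algebra.
Set Implicit Arguments. Unset Strict Implicit. Unset Printing Implicit Defensive.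
Import Order.TTheory GRing.Theory Num.Theory.
Local Open Scope ring_scope.

(* Points of the affine plane of order 3: the vector space F_3^2. *)
Definition pt := 'rV['F_3]_2.

(* The line through distinct points p, q is {p + t (q - p) | t in F_3};
   its third point (t = 2) is p /\ q. *)
Definition wedge (p q : pt) : pt := p + (q - p) *+ 2.

(* Lines of the plane: sets {p + t d | t in F_3} with d <> 0. A triple
   {x;y;z} of distinct points is a line iff z = wedge x y. *)

Section Matsuo.
Variable R : comPzRingType.

(* A = M_R(G,1): free R-module with basis the points. *)
Local Notation alg := {ffun pt -> R^o}.

Definition e (p : pt) : alg := [ffun x => (x == p)%:R].

(* product on basis vectors (all distinct points are collinear) *)
Definition prodb (p q : pt) : alg :=
  if p == q then 0 else e p + e q + e (wedge p q).

Definition mulA (u v : alg) : alg :=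
  \sum_(p : pt) \sum_(q : pt) (u p * v q) *: prodb p q.

Definition inspan (vs : seq alg) (v : alg) : Prop :=
  exists cs : seq R, size cs = size vs /\
    v = \sum_(i < size vs) cs`_i *: vs`_i.

Definition eigsp (x : alg) (lam : R) (v : alg) : Prop :=
  mulA x v = lam *: v.

Definition geigsp (x : alg) (lam : R) (v : alg) : Prop :=
  exists k : nat, iter k (fun w => mulA x w - lam *: w) v = 0.

Definition sall : alg := \sum_(p : pt) e p.

End Matsuo.
Notation alg R := {ffun pt -> R^o}.

(* In A, ad_l kills the points of l, while l.b = l + b + n for b in m and
   l.c = l + c + m for c in n: the points p /\ b, p in l, form the third line of
   the parallel class.  Hence (ad_l v)(x) only involves v(x) and the sums of the
   coordinates of v along m and n, and in characteristic 2 this gives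
   ad_l^3 = ad_l^2.  As x^2 and x - 1 are coprime, A = ker ad_l^2 (+) ker (ad_l - 1),
   the generalized eigenspaces are ker ad_l^2 and the 1-eigenspace, and no lam with
   lam and 1 - lam invertible is an eigenvalue.  The bases are read off from the
   coordinate descriptions of ker ad_l, ker (ad_l - 1) and ker ad_l^2. *)

From HB Require Import structures.
From mathcomp Require Import all_boot all_order all_algebra ring.

Set Implicit Arguments.
Unset Strict Implicit.
Unset Printing Implicit Defensive.

Import GRing.Theory.
Local Open Scope ring_scope.

(** * Lines of the affine plane of order 3 *)

Lemma wedgeE (p q : pt) : wedge p q = - (p + q).
Proof.
apply/rowP => i; rewrite !mxE; apply/eqP; rewrite -subr_eq0 opprK.
have -> : p 0 i + (q 0 i - p 0 i) *+ 2 + (p 0 i + q 0 i) = 3%:R * q 0 i by ring.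
by rewrite [3%:R](_ : _ = 0) ?mul0r //; apply/eqP.
Qed.

Lemma wedgexx (p : pt) : wedge p p = p.
Proof. by rewrite /wedge subrr mul0rn addr0. Qed.

Lemma wedgeC (p q : pt) : wedge p q = wedge q p.
Proof. by rewrite !wedgeE addrC. Qed.

Lemma wedgeK (p q : pt) : wedge p (wedge p q) = q.
Proof. by rewrite !wedgeE opprD opprK addKr. Qed.

Lemma wedge_neql (p q : pt) : p != q -> wedge p q != p.
Proof. by apply: contraNneq => wp; rewrite -[q](wedgeK p) wp wedgexx. Qed.

Lemma wedge_neqr (p q : pt) : p != q -> wedge p q != q.
Proof. by rewrite eq_sym wedgeC => /wedge_neql. Qed.

Definition wedge_closed (t : seq pt) := {in t &, forall p q, wedge p q \in t}.

Lemma line_wedge_closed (x y : pt) : wedge_closed [:: x; y; wedge x y].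
Proof.
have wyz : wedge y (wedge x y) = x by rewrite (wedgeC x) wedgeK.
move=> p q; rewrite !inE => /or3P[]/eqP-> /or3P[]/eqP->;
  rewrite ?wedgexx ?wedgeK ?wyz ?eqxx ?orbT //.
- by rewrite wedgeC eqxx !orbT.
- by rewrite wedgeC wedgeK eqxx !orbT.
- by rewrite wedgeC wyz eqxx.
Qed.

Lemma line_perm (t : seq pt) (p q : pt) :
  uniq t -> (size t <= 3)%N -> wedge_closed t -> p \in t -> q \in t -> p != q ->
  perm_eq [:: p; q; wedge p q] t.
Proof.
move=> ut st wt pt qt npq.
have u3 : uniq [:: p; q; wedge p q].
  by rewrite /= !inE negb_or npq eq_sym wedge_neql // eq_sym wedge_neqr.
have sub3 : {subset [:: p; q; wedge p q] <= t}.
  by move=> r; rewrite !inE => /or3P[]/eqP->; rewrite ?wt.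
by apply: uniq_perm => //; have [] := uniq_min_size u3 sub3 st.
Qed.

Lemma wedge_parallel (L M N : seq pt) (q : pt) :
  wedge_closed L -> wedge_closed M -> uniq L -> uniq N -> (size N <= size L)%N ->
  {in L, forall x, x \notin M} -> (forall x, x \notin L -> x \notin M -> x \in N) ->
  q \in M -> perm_eq [seq wedge q p | p <- L] N.
Proof.
move=> wL wM uL uN sNL dLM cover qM.
have uW : uniq [seq wedge q p | p <- L].
  by rewrite map_inj_uniq // => p p' /(congr1 (wedge q)); rewrite !wedgeK.
have subW : {subset [seq wedge q p | p <- L] <= N}.
  move=> _ /mapP[p pL ->]; apply: cover; apply/negP => wqp.
  - have qL : q \in L by rewrite -(wedgeK p q) (wedgeC p q) wL.
    by move: (dLM q qL); rewrite qM.
  - by have := dLM p pL; rewrite -(wedgeK q p) wM.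
rewrite -(size_map (wedge q) L) in sNL.
have [_ eqW] := uniq_min_size uW subW sNL.
exact: uniq_perm.
Qed.

Lemma uniq_cat_notin (T : eqType) (s1 s2 : seq T) x :
  uniq (s1 ++ s2) -> x \in s2 -> x \notin s1.
Proof. by rewrite cat_uniq => /and3P[_ /hasPn s12 _] /s12. Qed.

Lemma uniq_cover (s : seq pt) : uniq s -> size s = 9%N -> forall x, x \in s.
Proof.
move=> us ss x; have sub : {subset s <= enum pt} by move=> y; rewrite mem_enum.
have le_s : (size (enum pt) <= size s)%N by rewrite ss -cardE card_mx card_Fp.
by have [_ ->] := uniq_min_size us sub le_s; rewrite mem_enum.
Qed.

(** * Endomorphisms with f^3 = f^2 *)

Section CubeEqSquare.
Variables (R : comPzRingType) (V : lmodType R) (f : {linear V -> V}).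
Hypothesis f3 : forall v, f (f (f v)) = f (f v).

Lemma eigenvector_eq0 (lam : R) (v : V) :
  (exists mu, mu * lam = 1) -> (exists nu, nu * (1 - lam) = 1) ->
  f v = lam *: v -> v = 0.
Proof.
move=> [mu mu_lam] [nu nu_lam] fv.
have lam_v : (lam ^+ 2 * (1 - lam)) *: v = 0.
  move: (f3 v); rewrite !(fv, linearZ) /= !scalerA => e3.
  have -> : lam ^+ 2 * (1 - lam) = lam * lam - lam * lam * lam by ring.
  by rewrite scalerBl e3 subrr.
have -> : v = (mu ^+ 2 * nu) *: ((lam ^+ 2 * (1 - lam)) *: v).
  rewrite scalerA.
  have -> : mu ^+ 2 * nu * (lam ^+ 2 * (1 - lam)) = (mu * lam) ^+ 2 * (nu * (1 - lam)) by ring.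
  by rewrite mu_lam nu_lam expr1n mulr1 scale1r.
by rewrite lam_v scaler0.
Qed.

Lemma iter_eq0_sq k v : iter k f v = 0 -> f (f v) = 0.
Proof.
elim: k v => [|k IHk] v; first by move=> /= ->; rewrite !linear0.
by rewrite iterSr => /IHk; rewrite f3.
Qed.

(* u := f v - v is fixed by f, so u = f (f u) = (f^3 - f^2) v = 0. *)
Lemma iter_subid_eq0 k v : iter k (fun w => f w - w) v = 0 -> f v = v.
Proof.
elim: k v => [|k IHk] v; first by move=> /= ->; rewrite linear0.
rewrite iterSr => /IHk fixed; apply/eqP; rewrite -subr_eq0; apply/eqP.
by rewrite -fixed -fixed !linearB /= f3 subrr.
Qed.

Lemma sq_eq0_fixed_eq0 v : f (f v) = 0 -> f v = v -> v = 0.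
Proof. by move=> f2v fv; rewrite -f2v !fv. Qed.

Lemma sq_sub_sq_eq0 v : f (f (v - f (f v))) = 0.
Proof. by rewrite !linearB /= !f3 subrr. Qed.

End CubeEqSquare.

(** * The Matsuo algebra *)

Lemma big_triple (V : nmodType) (F : pt -> V) (x y z : pt) :
  \sum_(p <- [:: x; y; z]) F p = F x + F y + F z.
Proof. by rewrite !big_cons big_nil addr0 addrA. Qed.

Lemma scale_regularE (R : comPzRingType) (a b : R) : a *: (b : R^o) = a * b.
Proof. by []. Qed.

Ltac alg_ring := apply/ffunP => ?; rewrite !ffunE ?scale_regularE; ring.

Section MatsuoAlgebra.
Variable R : comPzRingType.
Implicit Types (u v : alg R) (p q x : pt).

Lemma eC p q : e R p q = e R q p.
Proof. by rewrite !ffunE eq_sym. Qed.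

Lemma sum_delta (V : lmodType R) (F : pt -> V) p : \sum_q e R p q *: F q = F p.
Proof.
rewrite (bigD1 p) //= big1 => [|q /negbTE qp]; first by rewrite ffunE eqxx scale1r addr0.
by rewrite ffunE qp scale0r.
Qed.

Lemma sum_seq_delta (t : seq pt) (F : pt -> R) x :
  uniq t -> \sum_(p <- t) F p * e R p x = (x \in t)%:R * F x.
Proof.
elim: t => [|p t IHt] /=; first by rewrite big_nil mul0r.
case/andP => pt ut; rewrite big_cons IHt // inE ffunE.
by case: eqP => [->|_]; rewrite ?(negbTE pt) /= ?mulr1 ?mulr0 ?mul0r ?mul1r ?addr0 ?add0r.
Qed.

Lemma alg_sum_e v : v = \sum_p v p *: e R p.
Proof.
apply/ffunP => x; rewrite sum_ffunE.
under eq_bigr do rewrite ffunE eC.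
by rewrite -{1}(@sum_delta R^o v x); apply: eq_bigr => q _; apply: mulrC.
Qed.

Lemma sum_scale_e_val v x (t : seq pt) :
  uniq t -> (\sum_(q <- t) v q *: e R q) x = (x \in t)%:R * v x.
Proof.
move=> ut; rewrite sum_ffunE -(sum_seq_delta v x ut).
by apply: eq_bigr => q _; rewrite ffunE.
Qed.

Lemma sum_scale_e_const v (t : seq pt) c :
  {in t, forall x, v x = c} -> \sum_(p <- t) v p *: e R p = c *: \sum_(p <- t) e R p.
Proof. by move=> vc; rewrite scaler_sumr; apply: eq_big_seq => p /vc ->. Qed.

Lemma line_val (t : seq pt) x : uniq t -> (\sum_(p <- t) e R p) x = (x \in t)%:R.
Proof.
move=> ut; rewrite sum_ffunE -[RHS]mulr1 -(sum_seq_delta (fun=> 1) x ut).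
by apply: eq_bigr => p _; rewrite mul1r.
Qed.

Lemma sall_val x : sall R x = 1.
Proof.
rewrite sum_ffunE -[RHS](sum_delta (fun=> 1 : R^o) x).
by apply: eq_bigr => p _; rewrite eC scale_regularE mulr1.
Qed.

Lemma prodbC p q : prodb R p q = prodb R q p.
Proof. by rewrite /prodb eq_sym wedgeC (addrC (e R p)). Qed.

Lemma mulAC u v : mulA u v = mulA v u.
Proof.
rewrite /mulA exchange_big; apply: eq_bigr => p _; apply: eq_bigr => q _.
by rewrite mulrC prodbC.
Qed.

Lemma mulA_is_linear u : linear (mulA u).
Proof.
move=> a v w; rewrite /mulA scaler_sumr -big_split; apply: eq_bigr => p _ /=.
rewrite scaler_sumr -big_split; apply: eq_bigr => q _ /=.
by rewrite !ffunE scalerA -scalerDl mulrDr mulrCA.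
Qed.

HB.instance Definition _ (u : alg R) :=
  GRing.isLinear.Build R (alg R) (alg R) *:%R (mulA u) (mulA_is_linear u).

Lemma mulA_e p q : mulA (e R p) (e R q) = prodb R p q.
Proof.
rewrite /mulA; under eq_bigr do under eq_bigr do rewrite -scalerA.
under eq_bigr do rewrite -scaler_sumr sum_delta.
exact: sum_delta.
Qed.

Lemma mulA_line_e (t : seq pt) q :
  mulA (\sum_(p <- t) e R p) (e R q) = \sum_(p <- t) prodb R q p.
Proof. by rewrite mulAC linear_sum; apply: eq_bigr => p _ /=; rewrite mulA_e. Qed.

Lemma prodb_line (t : seq pt) p q :
  uniq t -> (size t <= 3)%N -> wedge_closed t -> p \in t -> q \in t -> p != q ->
  prodb R p q = \sum_(r <- t) e R r.
Proof.
move=> ut st wt pt qt npq.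
rewrite -(perm_big _ (line_perm ut st wt pt qt npq)) /= !big_cons big_nil.
by rewrite /prodb (negbTE npq) addr0 addrA.
Qed.

Lemma sum_prodb_parallel (L M N : seq pt) q :
  wedge_closed L -> wedge_closed M -> uniq L -> uniq N -> (size N <= size L)%N ->
  {in L, forall x, x \notin M} -> (forall x, x \notin L -> x \notin M -> x \in N) ->
  q \in M ->
  \sum_(p <- L) prodb R q p = e R q *+ size L + \sum_(p <- L) e R p + \sum_(p <- N) e R p.
Proof.
move=> wL wM uL uN sNL dLM cover qM.
rewrite -(perm_big _ (wedge_parallel wL wM uL uN sNL dLM cover qM)) /= big_map.
rewrite -iter_addr_0 -(count_predT L) -big_const_seq -!big_split /=.
apply: eq_big_seq => p pL; rewrite /prodb ifN //.
by apply: contraNneq (dLM p pL) => <-.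
Qed.

Lemma inspan_nil : inspan [::] (0 : alg R).
Proof. by exists [::]; rewrite big_ord0. Qed.

Lemma inspan_cons u vs (c : R) w : inspan vs w -> inspan (u :: vs) (c *: u + w).
Proof.
case=> cs [size_cs ->]; exists (c :: cs); split; first by rewrite /= size_cs.
by rewrite big_ord_recl.
Qed.

Lemma inspan_eq (f g : {linear alg R -> alg R}) vs v :
  inspan vs v -> all (fun u => f u == g u) vs -> f v = g v.
Proof.
case=> cs [_ ->] /allP fg; rewrite !linear_sum; apply: eq_bigr => i _.
by rewrite !linearZ (eqP (fg _ _)) // mem_nth.
Qed.

End MatsuoAlgebra.

Section GeneralizedEigenspaces.
Variables (R : comPzRingType) (x : alg R).
Hypothesis adx3 : forall v, mulA x (mulA x (mulA x v)) = mulA x (mulA x v).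

Lemma geigsp0E v : geigsp x 0 v <-> mulA x (mulA x v) = 0.
Proof.
split=> [[k]|x2v]; last by exists 2%N; rewrite /= !scale0r !subr0.
rewrite (@eq_iter _ _ (mulA x)) => [|w]; last by rewrite scale0r subr0.
exact: iter_eq0_sq.
Qed.

Lemma geigsp1E v : geigsp x 1 v <-> eigsp x 1 v.
Proof.
rewrite /eigsp scale1r; split=> [[k]|xv]; last by exists 1%N; rewrite /= xv scale1r subrr.
rewrite (@eq_iter _ _ (fun w => mulA x w - w)) => [|w]; last by rewrite scale1r.
exact: iter_subid_eq0.
Qed.

End GeneralizedEigenspaces.

Section CharTwo.
Variable R : comPzRingType.
Hypothesis char2 : 2%:R = 0 :> R.

Lemma addvv_char2 (V : lmodType R) (v : V) : v + v = 0.
Proof. by rewrite -mulr2n -scaler_nat char2 scale0r. Qed.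

Lemma oppv_char2 (V : lmodType R) (v : V) : - v = v.
Proof. by apply/eqP; rewrite eq_sym -addr_eq0 addvv_char2. Qed.

Lemma addv_eq0_char2 (V : lmodType R) (u v : V) : u + v = 0 -> u = v.
Proof. by move/eqP; rewrite addr_eq0 oppv_char2 => /eqP. Qed.

Lemma addKv_char2 (V : lmodType R) (u v : V) : u + (u + v) = v.
Proof. by rewrite addrA addvv_char2 add0r. Qed.

Lemma mulr3n_char2 (V : lmodType R) (v : V) : v *+ 3 = v.
Proof. by rewrite mulrS mulr2n addvv_char2 addr0. Qed.

Lemma sum_prodb_line (t : seq pt) q :
  uniq t -> size t = 3 -> wedge_closed t -> q \in t -> \sum_(p <- t) prodb R q p = 0.
Proof.
move=> ut st wt qt; rewrite (bigD1_seq q) //= /prodb eqxx add0r.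
rewrite big_seq_cond (eq_bigr (fun=> \sum_(r <- t) e R r)) => [|p /andP[pt pq]].
  have two : count (fun p => p != q) t = 2%N.
    by have := count_predC (pred1 q) t; rewrite count_uniq_mem // qt st add1n => -[].
  by rewrite -big_seq_cond big_const_seq two iter_addr_0 mulr2n addvv_char2.
by rewrite -/(prodb R q p) (prodb_line _ ut) ?st // eq_sym.
Qed.

End CharTwo.

(** * The adjoint action of a line *)

Section ParallelClass.
Variable R : comPzRingType.
Hypothesis char2 : 2%:R = 0 :> R.
Variables a1 a2 a3 b1 b2 b3 c1 c2 c3 : pt.
Local Notation L := [:: a1; a2; a3].
Local Notation M := [:: b1; b2; b3].
Local Notation N := [:: c1; c2; c3].
Hypothesis uniq_LMN : uniq (L ++ M ++ N).
Hypotheses (hl : a3 = wedge a1 a2) (hm : b3 = wedge b1 b2) (hn : c3 = wedge c1 c2).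

Local Notation l := (e R a1 + e R a2 + e R a3).
Local Notation m := (e R b1 + e R b2 + e R b3).
Local Notation n := (e R c1 + e R c2 + e R c3).
Local Notation ad := (mulA l).
Local Notation sumM v := (\sum_(p <- M) v p).
Local Notation sumN v := (\sum_(p <- N) v p).
Implicit Types (v : alg R) (p q x : pt).

Variant line_spec x : bool -> bool -> bool -> Set :=
  | OnL of x \in L : line_spec x true false false
  | OnM of x \in M : line_spec x false true false
  | OnN of x \in N : line_spec x false false true.

Lemma lineP x : line_spec x (x \in L) (x \in M) (x \in N).
Proof.
have uMN : uniq (M ++ N) by move: uniq_LMN; rewrite cat_uniq => /and3P[].
have notL y : y \in M ++ N -> y \notin L := uniq_cat_notin uniq_LMN.
have notM y : y \in N -> y \notin M := uniq_cat_notin uMN.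
have := uniq_cover uniq_LMN erefl x; rewrite !mem_cat.
have [xN|xN] := boolP (x \in N).
  by rewrite (negbTE (notM x xN)) (negbTE (notL x _)) ?mem_cat ?xN ?orbT // => _; apply: OnN.
have [xM|xM] := boolP (x \in M).
  by rewrite (negbTE (notL x _)) ?mem_cat ?xM // => _; apply: OnM.
by rewrite !orbF => xL; rewrite xL; apply: OnL.
Qed.

Lemma uniqL : uniq L.
Proof. by move: uniq_LMN; rewrite cat_uniq => /and3P[]. Qed.

Lemma uniqM : uniq M.
Proof. by move: uniq_LMN; rewrite !cat_uniq => /and3P[_ _ /and3P[]]. Qed.

Lemma uniqN : uniq N.
Proof. by move: uniq_LMN; rewrite !cat_uniq => /and3P[_ _ /and3P[]]. Qed.

Lemma closedL : wedge_closed L. Proof. by rewrite hl; apply: line_wedge_closed. Qed.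
Lemma closedM : wedge_closed M. Proof. by rewrite hm; apply: line_wedge_closed. Qed.
Lemma closedN : wedge_closed N. Proof. by rewrite hn; apply: line_wedge_closed. Qed.

Lemma big_pts (F : pt -> alg R) : \sum_q F q = \sum_(q <- L ++ M ++ N) F q.
Proof. by rewrite [RHS]big_uniq //; apply: eq_bigl => q; rewrite uniq_cover. Qed.

Lemma alg_lines v : v =
  \sum_(p <- L) v p *: e R p + \sum_(p <- M) v p *: e R p + \sum_(p <- N) v p *: e R p.
Proof. by rewrite {1}(alg_sum_e v) big_pts !big_cat /= addrA. Qed.

Lemma sall_lines : sall R = l + m + n.
Proof. by rewrite /sall big_pts !big_cat /= !big_triple addrA. Qed.

Lemma ad_e q : ad (e R q) = \sum_(p <- L) prodb R q p.
Proof. by rewrite -(big_triple (e R)) mulA_line_e. Qed.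

Lemma ad_eL q : q \in L -> ad (e R q) = 0.
Proof. by move=> qL; rewrite ad_e (sum_prodb_line char2 uniqL _ closedL). Qed.

Lemma ad_eM q : q \in M -> ad (e R q) = l + e R q + n.
Proof.
move=> qM; rewrite ad_e (sum_prodb_parallel R closedL closedM uniqL uniqN) //.
- by rewrite !big_triple /= (mulr3n_char2 char2) (addrC (e R q)).
- by move=> x; case: lineP.
- by move=> x; case: lineP.
Qed.

Lemma ad_eN q : q \in N -> ad (e R q) = l + e R q + m.
Proof.
move=> qN; rewrite ad_e (sum_prodb_parallel R closedL closedN uniqL uniqM) //.
- by rewrite !big_triple /= (mulr3n_char2 char2) (addrC (e R q)).
- by move=> x; case: lineP.
- by move=> x; case: lineP.
Qed.

Lemma ad_sum v :
  ad v = \sum_(q <- M) v q *: (l + e R q + n) + \sum_(q <- N) v q *: (l + e R q + m).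
Proof.
rewrite {1}(alg_sum_e v) linear_sum big_pts !big_cat /= big_seq big1 ?add0r => [|q qL].
  congr (_ + _); apply: eq_big_seq => q q_in; rewrite linearZ /=.
    by rewrite ad_eM.
  by rewrite ad_eN.
by rewrite linearZ /= ad_eL ?scaler0.
Qed.

Lemma adE v x : ad v x =
  (x \in L)%:R * (sumM v + sumN v) + (x \in M)%:R * (sumN v + v x) +
  (x \in N)%:R * (sumM v + v x).
Proof.
have shift t (w w' : alg R) : uniq t ->
    (\sum_(q <- t) v q *: (w + e R q + w')) x =
    (\sum_(q <- t) v q) * (w x + w' x) + (x \in t)%:R * v x.
  move=> ut; have -> : \sum_(q <- t) v q *: (w + e R q + w') =
      (\sum_(q <- t) v q) *: (w + w') + \sum_(q <- t) v q *: e R q.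
    by rewrite scaler_suml -big_split /=; apply: eq_bigr => q _; rewrite -scalerDr addrAC.
  by rewrite ffunE sum_scale_e_val // !ffunE scale_regularE.
rewrite ad_sum ffunE !shift ?uniqM ?uniqN // -!(big_triple (e R)).
by rewrite !line_val ?uniqL ?uniqM ?uniqN //; ring.
Qed.

Lemma adL v x : x \in L -> ad v x = sumM v + sumN v.
Proof. by rewrite adE; case: lineP => // _; rewrite /= mul1r !mul0r !addr0. Qed.

Lemma adM v x : x \in M -> ad v x = sumN v + v x.
Proof. by rewrite adE; case: lineP => // _; rewrite /= mul1r !mul0r add0r addr0. Qed.

Lemma adN v x : x \in N -> ad v x = sumM v + v x.
Proof. by rewrite adE; case: lineP => // _; rewrite /= mul1r !mul0r !add0r. Qed.

Lemma sumM_ad v : sumM (ad v) = sumM v + sumN v.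
Proof.
rewrite big_seq (eq_bigr (fun p => sumN v + v p)) => [|p]; last exact: adM.
by rewrite -big_seq big_split /= big_triple (addvv_char2 char2) add0r addrC.
Qed.

Lemma sumN_ad v : sumN (ad v) = sumM v + sumN v.
Proof.
rewrite big_seq (eq_bigr (fun p => sumM v + v p)) => [|p]; last exact: adN.
by rewrite -big_seq big_split /= big_triple (addvv_char2 char2) add0r.
Qed.

Lemma ad2L v x : x \in L -> ad (ad v) x = 0.
Proof. by move=> xL; rewrite adL // sumM_ad sumN_ad (addvv_char2 char2). Qed.

Lemma ad2M v x : x \in M -> ad (ad v) x = sumM v + v x.
Proof. by move=> xM; rewrite adM // sumN_ad adM // -addrA (addKv_char2 char2). Qed.

Lemma ad2N v x : x \in N -> ad (ad v) x = sumN v + v x.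
Proof.
by move=> xN; rewrite adN // sumM_ad adN // (addrC (sumM v)) -addrA (addKv_char2 char2).
Qed.

Lemma ad3 v : ad (ad (ad v)) = ad (ad v).
Proof.
apply/ffunP => x; case: (lineP x) => x_in; first by rewrite !ad2L.
  by rewrite !ad2M // sumM_ad adM // -addrA (addKv_char2 char2).
by rewrite !ad2N // sumN_ad adN // (addrC (sumM v)) -addrA (addKv_char2 char2).
Qed.

Lemma ad_sall : ad (sall R) = 0.
Proof.
have sum1 x y z : \sum_(p <- [:: x; y; z]) sall R p = 1.
  by rewrite big_triple !sall_val (addvv_char2 char2) add0r.
apply/ffunP => x; rewrite ffunE; case: (lineP x) => x_in.
- by rewrite adL // !sum1 (addvv_char2 char2).
- by rewrite adM // sum1 sall_val (addvv_char2 char2).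
- by rewrite adN // sum1 sall_val (addvv_char2 char2).
Qed.

Lemma ad_pairM q q' : q \in M -> q' \in M -> ad (e R q + e R q') = e R q + e R q'.
Proof.
move=> qM q'M; rewrite linearD /= !ad_eM //.
have -> : l + e R q + n + (l + e R q' + n) = e R q + e R q' + ((l + l) + (n + n)) by alg_ring.
by rewrite !(addvv_char2 char2) !addr0.
Qed.

Lemma ad_pairN q q' : q \in N -> q' \in N -> ad (e R q + e R q') = e R q + e R q'.
Proof.
move=> qN q'N; rewrite linearD /= !ad_eN //.
have -> : l + e R q + m + (l + e R q' + m) = e R q + e R q' + ((l + l) + (m + m)) by alg_ring.
by rewrite !(addvv_char2 char2) !addr0.
Qed.

Lemma ad_lineM : ad m = sall R.
Proof.
rewrite !linearD /= !ad_eM ?inE ?eqxx ?orbT // sall_lines.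
have -> : l + e R b1 + n + (l + e R b2 + n) + (l + e R b3 + n) =
  l + m + n + ((l + l) + (n + n)) by alg_ring.
by rewrite !(addvv_char2 char2) !addr0.
Qed.

Lemma ad_lineN : ad n = sall R.
Proof.
rewrite !linearD /= !ad_eN ?inE ?eqxx ?orbT // sall_lines.
have -> : l + e R c1 + m + (l + e R c2 + m) + (l + e R c3 + m) =
  l + m + n + ((l + l) + (m + m)) by alg_ring.
by rewrite !(addvv_char2 char2) !addr0.
Qed.

Lemma eigsp0_span v : eigsp l 0 v <-> inspan [:: e R a1; e R a2; e R a3; sall R] v.
Proof.
rewrite /eigsp scale0r; split=> [ad0|span_v]; last first.
  apply: (@inspan_eq _ ad \0 _ _ span_v).
  by rewrite /= ad_sall !ad_eL ?eqxx ?inE ?eqxx ?orbT.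
have vM x : x \in M -> v x = sumN v.
  by move=> xM; apply/esym/(addv_eq0_char2 char2); rewrite -(adM v xM) ad0 ffunE.
have vN x : x \in N -> v x = sumM v.
  by move=> xN; apply/esym/(addv_eq0_char2 char2); rewrite -(adN v xN) ad0 ffunE.
have sMN : sumM v = sumN v.
  by apply: (addv_eq0_char2 char2); rewrite -(@adL v a1) ?ad0 ?ffunE // inE eqxx.
pose c := sumN v.
suff -> : v = (v a1 - c) *: e R a1 + ((v a2 - c) *: e R a2 +
    ((v a3 - c) *: e R a3 + (c *: sall R + 0))).
  by do 4!apply: inspan_cons; apply: inspan_nil.
rewrite {1}(alg_lines v) (sum_scale_e_const vM) (sum_scale_e_const vN) sMN sall_lines /c.
by rewrite !big_triple; alg_ring.
Qed.

Lemma eigsp1_span v : eigsp l 1 v <->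
  inspan [:: e R b1 + e R b2; e R b1 + e R b3; e R c1 + e R c2; e R c1 + e R c3] v.
Proof.
rewrite /eigsp scale1r; split=> [adv|span_v]; last first.
  apply: (@inspan_eq _ ad idfun _ _ span_v); rewrite /= andbT.
  by apply/and4P; split; apply/eqP;
    [apply: ad_pairM | apply: ad_pairM | apply: ad_pairN | apply: ad_pairN];
    rewrite !inE eqxx ?orbT.
have sN0 : sumN v = 0.
  by apply: (addIr (v b1)); rewrite add0r -(@adM v b1) ?adv // inE eqxx.
have sM0 : sumM v = 0.
  by apply: (addIr (v c1)); rewrite add0r -(@adN v c1) ?adv // inE eqxx.
have vL x : x \in L -> v x = 0 by move=> xL; rewrite -adv adL // sN0 sM0 addr0.
have vb1 : v b1 = v b2 + v b3.
  by apply: (addv_eq0_char2 char2); rewrite addrA -big_triple.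
have vc1 : v c1 = v c2 + v c3.
  by apply: (addv_eq0_char2 char2); rewrite addrA -big_triple.
suff -> : v = v b2 *: (e R b1 + e R b2) + (v b3 *: (e R b1 + e R b3) +
    (v c2 *: (e R c1 + e R c2) + (v c3 *: (e R c1 + e R c3) + 0))).
  by do 4!apply: inspan_cons; apply: inspan_nil.
by rewrite {1}(alg_lines v) (sum_scale_e_const vL) !big_triple vb1 vc1; alg_ring.
Qed.

Lemma ker_ad2_span v : ad (ad v) = 0 <-> inspan [:: e R a1; e R a2; e R a3; m; n] v.
Proof.
split=> [ad2v|span_v]; last first.
  apply: (@inspan_eq _ (ad \o ad) \0 _ _ span_v); rewrite /= ad_lineM ad_lineN ad_sall.
  by rewrite !ad_eL ?linear0 ?eqxx // !inE eqxx ?orbT.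
have vM x : x \in M -> v x = sumM v.
  by move=> xM; apply/esym/(addv_eq0_char2 char2); rewrite -(ad2M v xM) ad2v ffunE.
have vN x : x \in N -> v x = sumN v.
  by move=> xN; apply/esym/(addv_eq0_char2 char2); rewrite -(ad2N v xN) ad2v ffunE.
suff -> : v = v a1 *: e R a1 + (v a2 *: e R a2 + (v a3 *: e R a3 +
    (sumM v *: m + (sumN v *: n + 0)))).
  by do 5!apply: inspan_cons; apply: inspan_nil.
by rewrite {1}(alg_lines v) (sum_scale_e_const vM) (sum_scale_e_const vN) !big_triple; alg_ring.
Qed.

End ParallelClass.

Theorem proposition5p16 (R : comPzRingType) (hR2 : 2%:R = 0 :> R)
  (a1 a2 a3 b1 b2 b3 c1 c2 c3 : pt)
  (huniq : uniq [:: a1; a2; a3; b1; b2; b3; c1; c2; c3])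
  (hl : a3 = wedge a1 a2) (hm : b3 = wedge b1 b2) (hn : c3 = wedge c1 c2) :
  let l : alg R := e R a1 + e R a2 + e R a3 in
  let m : alg R := e R b1 + e R b2 + e R b3 in
  let n : alg R := e R c1 + e R c2 + e R c3 in
  let s : alg R := sall R in
  (* the only eigenvalues are 0 and 1 *)
  (forall lam : R, (exists mu : R, mu * lam = 1) ->
     (exists nu : R, nu * (1 - lam) = 1) ->
     forall v, eigsp l lam v -> v = 0) /\
  (forall v, eigsp l 0 v <-> inspan [:: e R a1; e R a2; e R a3; s] v) /\
  (forall v, eigsp l 1 v <->
     inspan [:: e R b1 + e R b2; e R b1 + e R b3; e R c1 + e R c2; e R c1 + e R c3] v) /\
  (forall v, geigsp l 0 v <-> inspan [:: e R a1; e R a2; e R a3; m; n] v) /\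
  (forall v, geigsp l 1 v <-> eigsp l 1 v) /\
  (* A = gen. 0-eigenspace (+) 1-eigenspace *)
  (forall v, exists x y, geigsp l 0 x /\ eigsp l 1 y /\ v = x + y) /\
  (forall v, geigsp l 0 v -> eigsp l 1 v -> v = 0).
Proof.
move=> l m n s.
have l3 : forall v, mulA l (mulA l (mulA l v)) = mulA l (mulA l v) :=
  ad3 hR2 huniq hl hm hn.
split; first by move=> lam unit_lam unit_1lam v; apply: eigenvector_eq0.
split; first exact (eigsp0_span hR2 huniq hl hm hn).
split; first exact (eigsp1_span hR2 huniq hl hm hn).
split; first by move=> v; apply: iff_trans (geigsp0E l3 v) (ker_ad2_span hR2 huniq hl hm hn v).
split; first exact: geigsp1E l3.
split.
  move=> v; exists (v - mulA l (mulA l v)), (mulA l (mulA l v)).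
  by rewrite (geigsp0E l3) /eigsp scale1r l3 subrK sq_sub_sq_eq0.
by move=> v /(geigsp0E l3) l2v; rewrite /eigsp scale1r; apply: sq_eq0_fixed_eq0.
Qed.
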